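(* Let $L,R$ be positive integers and let $p=p_{-L}\cdots p_{-1}\,X\,p_1\cdots p_R$ be an injective pattern. Let $f:\{0,1\}^{L+R+1}\to\{0,1\}$ be the injective pattern-induced rule of $p$, i.e. $f(a_{-L},\dots,a_0,\dots,a_R)=1-a_0$ if $a_i=p_i$ for all $i\in\{-L,\dots,R\}\setminus\{0\}$, and $f(a_{-L},\dots,a_R)=a_0$ otherwise. Then the global transformation $\tau:\{0,1\}^{\mathbb{Z}}\to\{0,1\}^{\mathbb{Z}}$, $\tau(c)_n=f(c_{n-L},\dots,c_{n+R})$, is injective.
   Context: Patterns are finite words over the alphabet $\{0,1,X\}$, where $X$ is a wildcard standing for either state $0$ or $1$. Two words $u=u_1\cdots u_\ell$ and $v=v_1\cdots v_\ell$ of the same length over $\{0,1,X\}$ are called equal if for every position $t$ either $u_t=v_t$ or at least one of $u_t,v_t$ is $X$; otherwise they are unequal (i.e. there is a position $t$ with $u_t,v_t\in\{0,1\}$ and $u_t\neq v_t$). For a word $w=w_{-L}\cdots w_{-1}Xw_1\cdots w_R$ with $w_i\in\{0,1\}$ for $i\neq 0$ and the wildcard $X$ in position $0$, its prefix substring of length $\ell$ is $w_{-L}\cdots w_{-L+\ell-1}$ and its suffix substring of length $\ell$ is $w_{R-\ell+1}\cdots w_R$ ($1\le \ell\le L+R$). Such a word is an injective pattern if: when $L\le R$, for every $\ell$ with $L+1\le \ell\le L+R$ (i.e. every prefix substring containing $X$) the prefix substring of length $\ell$ is unequal to the suffix substring of length $\ell$; and when $L>R$, for every $\ell$ with $R+1\le\ell\le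 L+R$ (every suffix substring containing $X$) the suffix substring of length $\ell$ is unequal to the prefix substring of length $\ell$. (For example, for $L=1,R=3$ the injective patterns are $0X011$, $0X110$, $1X001$, $1X100$.) The injective pattern-induced rule flips the centre cell exactly when the neighbourhood matches the pattern (with the centre arbitrary) and leaves it unchanged otherwise. $\tau$ is injective if $c_1\ne c_2$ implies $\tau(c_1)\ne\tau(c_2)$. *)

From mathcomp Require Import all_boot.
From Stdlib Require Import ZArith.
Set Implicit Arguments. Unset Strict Implicit. Unset Printing Implicit Defensive.

(* Letters of the alphabet {0,1,X}: Some false = 0, Some true = 1, None = X. *)
Definition letter := option bool.

Definition letter_eq (a b : letter) : bool :=
  match a, b with Some x, Some y => x == y | _, _ => true end.

Definition word_eq (u v : seq letter) : bool :=
  (size u == size v) && all2 letter_eq u v.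

(* The word w_{-L} .. w_{-1} X w_1 .. w_R, given wl = [w_{-L};..;w_{-1}] and
   wr = [w_1;..;w_R]. *)
Definition pattern_word (wl wr : seq bool) : seq letter :=
  map Some wl ++ None :: map Some wr.

Definition prefix_sub (w : seq letter) (l : nat) : seq letter := take l w.
Definition suffix_sub (w : seq letter) (l : nat) : seq letter := drop (size w - l) w.

Definition injective_pattern (wl wr : seq bool) : Prop :=
  let L := size wl in let R := size wr in let w := pattern_word wl wr in
  if L <= R then
    forall l, L + 1 <= l <= L + R -> ~~ word_eq (prefix_sub w l) (suffix_sub w l)
  else
    forall l, R + 1 <= l <= L + R -> ~~ word_eq (suffix_sub w l) (prefix_sub w l).

(* Local rule f : {0,1}^{L+R+1} -> {0,1}, neighbourhood a = [a_{-L};..;a_0;..;a_R]: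
   flip a_0 iff a_i = p_i for all i <> 0. *)
Definition pattern_rule (wl wr : seq bool) (a : seq bool) : bool :=
  let L := size wl in
  let a0 := nth false a L in
  if (take L a == wl) && (drop L.+1 a == wr) then ~~ a0 else a0.

Definition neighbourhood (L R : nat) (c : Z -> bool) (n : Z) : seq bool :=
  mkseq (fun k => c (n - Z.of_nat L + Z.of_nat k)%Z) (L + R + 1).

Definition global_map (L R : nat) (f : seq bool -> bool) (c : Z -> bool) : Z -> bool :=
  fun n => f (neighbourhood L R c n).

From mathcomp Require Import all_boot zify.
From Stdlib Require Import ZArith Lia FunctionalExtensionality.

Set Implicit Arguments.
Unset Strict Implicit.

(* Call n a match site of c when the neighbourhood of n in c agrees with the
   pattern off the centre. Injectivity of the pattern says exactly that two
   distinct match sites are more than max(L, R) apart, so no match site lies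
   in the neighbourhood of another one. Flipping the centre cells of all match
   sites therefore creates and destroys no match site, and applying the rule
   twice flips every match site back: the global map is an involution. *)

Lemma all2_nth (T : Type) (r : T -> T -> bool) x0 (u v : seq T) :
  size u = size v -> (forall i, i < size u -> r (nth x0 u i) (nth x0 v i)) ->
  all2 r u v.
Proof.
elim: u v => [|a u IHu] [|b v] //= [size_uv] r_nth.
by rewrite (r_nth 0) //=; apply: IHu => // i lt_iu; apply: (r_nth i.+1).
Qed.

Lemma letter_eq_sym (a b : letter) : letter_eq a b = letter_eq b a.
Proof. by case: a b => [x|] [y|] //=; rewrite eq_sym. Qed.

Lemma word_eq_sym (u v : seq letter) : word_eq u v = word_eq v u.
Proof.
rewrite /word_eq eq_sym; case: eqP => //= _.
by elim: u v => [|a u IHu] [|b v] //=; rewrite letter_eq_sym IHu.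
Qed.

Section PatternRule.

Variables wl wr : seq bool.

Local Notation L := (size wl).
Local Notation R := (size wr).
Local Notation w := (pattern_word wl wr).
Local Notation nbh := (neighbourhood L R).
Local Notation tau := (global_map L R (pattern_rule wl wr)).

(* The pattern with its wildcard replaced by an arbitrary bit. *)
Definition pattern_filled : seq bool := wl ++ false :: wr.

Definition matches (c : Z -> bool) (n : Z) : bool :=
  (take L (nbh c n) == wl) && (drop L.+1 (nbh c n) == wr).

Lemma size_pattern_word : size w = L + R + 1.
Proof. by rewrite size_cat /= !size_map; lia. Qed.

Lemma nth_pattern_word k : k < L + R + 1 ->
  nth None w k = if k == L then None else Some (nth false pattern_filled k).
Proof.
move=> lt_kN; rewrite /pattern_word /pattern_filled !nth_cat size_map.
case: ltnP => [lt_kL | le_Lk]; first by rewrite (nth_map false) // ifF //; lia.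
case: eqP => [-> | ne_kL]; first by rewrite subnn.
have [j def_j] : exists j, k - L = j.+1 by exists (k - L).-1; lia.
by rewrite def_j /= (nth_map false) //; lia.
Qed.

Lemma matchesP c n : reflect
  (forall k, k < L + R + 1 -> k <> L ->
     c (n - Z.of_nat L + Z.of_nat k)%Z = nth false pattern_filled k)
  (matches c n).
Proof.
rewrite /matches /neighbourhood /pattern_filled.
apply: (iffP andP) => [[/eqP take_nbh /eqP drop_nbh] k lt_kN ne_kL | c_nth].
  rewrite nth_cat; case: ltnP => [lt_kL | le_Lk].
    by rewrite -[in nth _ wl _]take_nbh nth_take // nth_mkseq //; lia.
  have [j def_k] : exists j, k = L.+1 + j by exists (k - L.+1); lia.
  subst k.
  rewrite (_ : L.+1 + j - L = j.+1) /=; last by lia.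
  by rewrite -[in nth _ wr _]drop_nbh nth_drop nth_mkseq //; lia.
split; apply/eqP/(@eq_from_nth _ false).
- by rewrite size_takel // size_mkseq; lia.
- move=> i; rewrite size_takel ?size_mkseq; last lia.
  move=> lt_iL; rewrite nth_take // nth_mkseq; last lia.
  by rewrite c_nth ?nth_cat ?lt_iL //; lia.
- by rewrite size_drop size_mkseq; lia.
- move=> i; rewrite size_drop size_mkseq => lt_iR.
  rewrite nth_drop nth_mkseq; last lia.
  rewrite c_nth; [|lia|lia]; rewrite nth_cat ifF; last lia.
  by rewrite (_ : L.+1 + i - L = i.+1) //; lia.
Qed.

Lemma global_map_matches c n : tau c n = if matches c n then ~~ c n else c n.
Proof.
rewrite /global_map /pattern_rule /matches /neighbourhood nth_mkseq; last lia.
by rewrite (_ : (n - Z.of_nat L + Z.of_nat L)%Z = n) //; lia.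
Qed.

Lemma matches_self_overlap c n d : matches c n -> matches c (n + Z.of_nat d)%Z ->
  d <= L + R + 1 -> word_eq (take (L + R + 1 - d) w) (drop d w).
Proof.
move=> /matchesP match_n /matchesP match_nd le_dN.
have size_take : size (take (L + R + 1 - d) w) = L + R + 1 - d.
  by rewrite size_takel // size_pattern_word; lia.
have size_drop : size (drop d w) = L + R + 1 - d.
  by rewrite size_drop size_pattern_word.
apply/andP; split; first by rewrite size_take size_drop.
apply: (@all2_nth _ _ None); first by rewrite size_take size_drop.
rewrite size_take => i lt_i; rewrite nth_take // nth_drop.
rewrite !nth_pattern_word; try lia.
case: eqP => [//|ne_iL]; case: eqP => [//|ne_diL] /=.
rewrite -match_nd -?match_n; try lia.
by rewrite (_ : (n + Z.of_nat d - Z.of_nat L + Z.of_nat i)%Z =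
                (n - Z.of_nat L + Z.of_nat (d + i))%Z) //; lia.
Qed.

Hypothesis pattern_inj : injective_pattern wl wr.

Lemma matches_apart c n d : matches c n -> matches c (n + Z.of_nat d)%Z ->
  0 < d -> d <= maxn L R -> False.
Proof.
move=> match_n match_nd gt_d0 le_d.
have le_dN : d <= L + R + 1 by lia.
have overlap := matches_self_overlap match_n match_nd le_dN.
have size_suffix : size w - (L + R + 1 - d) = d by rewrite size_pattern_word; lia.
move: pattern_inj; rewrite /injective_pattern /prefix_sub /suffix_sub /=.
case: ifP => le_LR /(_ (L + R + 1 - d)); rewrite size_suffix.
- by rewrite overlap => /(_ _)/negP; apply; lia.
- by rewrite word_eq_sym overlap => /(_ _)/negP; apply; lia.
Qed.

Lemma matches_isolated c n k : matches c n -> k < L + R + 1 -> k <> L ->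
  ~~ matches c (n - Z.of_nat L + Z.of_nat k)%Z.
Proof.
move=> match_n lt_kN ne_kL; apply/negP => match_k.
case: (ltnP k L) => [lt_kL | le_Lk].
  rewrite (_ : n = n - Z.of_nat L + Z.of_nat k + Z.of_nat (L - k))%Z in match_n;
    last lia.
  by apply: (matches_apart match_k match_n); lia.
rewrite (_ : n - Z.of_nat L + Z.of_nat k = n + Z.of_nat (k - L))%Z in match_k;
  last lia.
by apply: (matches_apart match_n match_k); lia.
Qed.

Lemma matches_global_map_of_matches c n : matches c n -> matches (tau c) n.
Proof.
move=> match_n; apply/matchesP => k lt_kN ne_kL.
rewrite global_map_matches (negbTE (matches_isolated match_n lt_kN ne_kL)).
exact: (matchesP _ _ match_n).
Qed.

Lemma matches_global_map c n : matches (tau c) n = matches c n.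
Proof.
apply/idP/idP => [match_tau | ]; last exact: matches_global_map_of_matches.
apply/matchesP => k lt_kN ne_kL.
have not_match_k : ~~ matches c (n - Z.of_nat L + Z.of_nat k)%Z.
  apply: contraNN (matches_isolated match_tau lt_kN ne_kL).
  exact: matches_global_map_of_matches.
by rewrite -(matchesP _ _ match_tau) // global_map_matches (negbTE not_match_k).
Qed.

Lemma global_map_involutive : involutive tau.
Proof.
move=> c; apply: functional_extensionality => n.
rewrite global_map_matches matches_global_map global_map_matches.
by case: (matches c n); rewrite ?negbK.
Qed.

End PatternRule.

Theorem theorem3p1 (wl wr : seq bool) :
  0 < size wl -> 0 < size wr ->
  injective_pattern wl wr ->
  forall c1 c2 : Z -> bool,
    global_map (size wl) (size wr) (pattern_rule wl wr) c1 =
    global_map (size wl) (size wr) (pattern_rule wl wr) c2 ->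
    c1 = c2.
Proof.
move=> _ _ pattern_inj.
exact: inv_inj (global_map_involutive pattern_inj).
Qed.
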